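(* Let $n\ge 3$, let $A_1\ldots A_n$ be a regular $n$-gon in the coordinate plane with center $O$ of abscissa $o$ and circumradius $R$, and let $f(x)$ be a real polynomial of degree $n$ whose roots, counted with multiplicity, are the abscissas of $A_1,\ldots,A_n$. Consider all circles centered at $O$ that are tangent to some segment $A_iA_j$ ($i\ne j$, sides included) not passing through $O$; these are the circles $\omega_k$ of radius $R\cos(\pi k/n)$, $k=1,\ldots,\lfloor (n-1)/2\rfloor$ (with $\omega_1$ the inscribed circle). Then for each such circle, exactly two of the vertical lines through the roots of $f'$ are tangent to it; that is, $o\pm R\cos(\pi k/n)$ are roots of $f'$ for each $k=1,\ldots,\lfloor (n-1)/2\rfloor$. When $n$ is even, the one remaining root of $f'$ is $o$ (the corresponding vertical line passes through $O$).
   Context: ''Vertical'' means parallel to the ordinate axis. *)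

From HB Require Import structures.
From mathcomp Require Import all_boot all_order all_algebra.
From mathcomp Require Import all_classical all_reals all_analysis.
Set Implicit Arguments. Unset Strict Implicit. Unset Printing Implicit Defensive.
Import Order.TTheory GRing.Theory Num.Theory.
Local Open Scope ring_scope.

Definition regular_ngon (R : realType) (n : nat) (A : 'I_n -> R * R)
    (O : R * R) (r : R) : Prop :=
  0 < r /\
  exists (t : R) (s : R), (s = 1 \/ s = -1) /\
    forall i : 'I_n,
      A i = (O.1 + r * cos (t + s * (2 * pi * i%:R / n%:R)),
             O.2 + r * sin (t + s * (2 * pi * i%:R / n%:R))).

From HB Require Import structures.
From mathcomp Require Import all_boot all_order all_algebra.
From mathcomp Require Import all_classical all_reals all_analysis.
From mathcomp Require Import complex polyorder ring lra zify.
Import Order.TTheory GRing.Theory Num.Theory.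
Local Open Scope ring_scope.

(* The roots of f are o + r cos (t + i d) with d = +-2 pi / n.  For x = o + r cos th,
   pairing cis (t + i d) with its conjugate and factoring w^n - cis (n t) over the
   n-th roots of unity gives f(x) = c (r/2)^n (2 cos (n th) - 2 cos (n t)), c the
   leading coefficient: up to an affine change of variable, f is a Chebyshev
   polynomial plus a constant.  Differentiating in th,
   f'(x) r sin th = c (r/2)^n 2n sin (n th), so f' vanishes at the n - 1 distinct
   points o + r cos (pi j / n), 0 < j < n.  These are all the roots of f', and
   cos (pi (n - j) / n) = - cos (pi j / n) pairs them as o +- r cos (pi k / n),
   leaving o when n is even. *)

Section PairedProducts.
Context {T : comPzRingType}.

Lemma prod_nat_subn (G : nat -> T) N m : (m <= N)%N ->
  \prod_(1 <= k < m.+1) G (N - k)%N = \prod_(N - m <= j < N) G j.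
Proof.
elim: m => [|m IHm] m_le_N; first by rewrite big_geq // subn0 big_geq.
rewrite big_nat_recr //= IHm; last by lia.
rewrite (@big_ltn _ _ _ (N - m.+1)); last by lia.
by rewrite (_ : (N - m.+1).+1 = N - m)%N 1?mulrC //; lia.
Qed.

Lemma prod_nat_pairs (G : nat -> T) n : (0 < n)%N ->
  \prod_(1 <= j < n) G j =
  \prod_(1 <= k < ((n.-1)./2).+1) (G k * G (n - k)%N)
    * (if odd n then 1 else G n./2).
Proof.
move=> n_gt0; set m := (n.-1)./2.
rewrite big_split /= prod_nat_subn; last by lia.
rewrite (@big_cat_nat _ _ _ m.+1 1 n) /=; [|lia|lia].
rewrite (@big_cat_nat _ _ _ (n - m) m.+1 n) /=; [|lia|lia].
rewrite [\prod_(m.+1 <= i < n - m) G i * _]mulrC mulrA; congr (_ * _).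
case: ifP => odd_n.
  by rewrite big_geq //; lia.
have -> : (n - m = m.+2)%N by lia.
have -> : (n./2 = m.+1)%N by lia.
by rewrite big_nat1.
Qed.
End PairedProducts.

Section UnitCircle.
Context {R : realType}.

Definition cis (a : R) : R[i] := Complex (cos a) (sin a).

Lemma cis0 : cis 0 = 1.
Proof. by rewrite /cis cos0 sin0. Qed.

Lemma cisD a b : cis (a + b) = cis a * cis b.
Proof. by rewrite /cis cosD sinD -[RHS]/(mulc _ _) /= (addrC (sin a * cos b)). Qed.

Lemma cisX a k : cis a ^+ k = cis (k%:R * a).
Proof.
elim: k => [|k IHk]; first by rewrite expr0 mul0r cis0.
by rewrite exprS IHk -cisD mulrSr mulrDl mul1r addrC.
Qed.

Lemma cisN a : cis (- a) = (cis a)^*.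
Proof. by rewrite /cis cosN sinN. Qed.

Lemma cis_mulN a : cis a * cis (- a) = 1.
Proof. by rewrite -cisD subrr cis0. Qed.

Lemma cis_neq0 a : cis a != 0.
Proof. by apply/eqP => ca0; have /eqP := cis_mulN a; rewrite ca0 mul0r eq_sym oner_eq0. Qed.

Lemma cis_addN a : cis a + cis (- a) = ((2 * cos a)%:C)%C.
Proof. by rewrite /cis cosN sinN -[LHS]/(addc _ _) /= subrr mulr_natl mulr2n. Qed.

Lemma cos_neq1 (x : R) : 0 < x < pi *+ 2 -> cos x != 1.
Proof.
move=> /andP[x_gt0 x_lt2pi]; apply/eqP => cx1.
have pi_gt0 : (0 : R) < pi := pi_gt0 R.
have zero_in : (0 : R) \in `[0, pi] by rewrite in_itv /=; apply/andP; split; lra.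
have [x_le_pi | pi_lt_x] := lerP x pi.
  have x_in : x \in `[0, pi] by rewrite in_itv /=; apply/andP; split; lra.
  by have := cos_inj x_in zero_in; rewrite cx1 cos0 => /(_ erefl); lra.
have y_in : pi *+ 2 - x \in `[0, pi] by rewrite in_itv /=; apply/andP; split; lra.
have := cos_inj y_in zero_in.
by rewrite cos0 addrC cosD2pi cosN cx1 => /(_ erefl); lra.
Qed.

Lemma cis_primitive_root n : (0 < n)%N -> n.-primitive_root (cis (2 * pi / n%:R)).
Proof.
move=> n_gt0; have n_neq0 : (n%:R : R) != 0 by rewrite pnatr_eq0 -lt0n.
have [pi_gt0 n_pos] : (0 : R) < pi /\ (0 : R) < n%:R by split; [exact: pi_gt0 | rewrite ltr0n].
have unity : cis (2 * pi / n%:R) ^+ n = 1.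
  by rewrite cisX mulrCA divff // mulr1 /cis mulr_natl cos2pi sin2pi.
have [m prim_m m_dvd_n] := prim_order_exists n_gt0 unity.
have m_le_n : (m <= n)%N := dvdn_leq n_gt0 m_dvd_n.
have [m_lt_n | n_le_m] := ltnP m n; last by move: prim_m; rewrite (@anti_leq m n) ?m_le_n.
have m_pos : (0 : R) < m%:R by rewrite ltr0n (prim_order_gt0 prim_m).
have := congr1 (@complex.Re R) (prim_expr_order prim_m).
rewrite cisX (_ : m%:R * _ = pi *+ 2 * (m%:R / n%:R)); last by rewrite mulr2n; field.
rewrite [complex.Re _]/= => /eqP; apply: contraTT => _; apply: cos_neq1; apply/andP; split.
  by apply: mulr_gt0; [rewrite pmulrn_lgt0 | exact: divr_gt0].
rewrite gtr_pMr; last by rewrite pmulrn_lgt0.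
by rewrite ltr_pdivrMr // mul1r ltr_nat.
Qed.

Lemma prod_sub_cis n t d w : n.-primitive_root (cis d) ->
  \prod_(i < n) (w - cis (t + i%:R * d)) = w ^+ n - cis (n%:R * t).
Proof.
move=> prim_d; have t_neq0 := cis_neq0 t.
have /(congr1 (fun p => p.[w / cis t])) := factor_Xn_sub_1 prim_d.
rewrite horner_prod big_mkord; under eq_bigr do rewrite hornerXsubC.
rewrite !hornerE => unity_fact.
have factor (i : 'I_n) : w - cis (t + i%:R * d) = cis t * (w / cis t - cis d ^+ i).
  by rewrite cisD cisX mulrBr mulrCA divff // mulr1.
rewrite (eq_bigr _ (fun i _ => factor i)) big_split /= prodr_const card_ord unity_fact.
by rewrite -cisX mulrBr mulr1 -exprMn mulrCA divff // mulr1.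
Qed.

Lemma mul_cis_subN th a : (cis th - cis a) * (cis th - cis (- a)) =
  cis th * ((2 * cos th - 2 * cos a)%:C)%C.
Proof.
rewrite rmorphB /= -!cis_addN.
have -> : (cis th - cis a) * (cis th - cis (- a)) =
    cis th * (cis th + cis (- th) - (cis a + cis (- a)))
    - cis th * cis (- th) + cis a * cis (- a) by ring.
by rewrite !cis_mulN subrK.
Qed.

Lemma prod_cos_sub n t d th : n.-primitive_root (cis d) ->
  \prod_(i < n) (2 * cos th - 2 * cos (t + i%:R * d)) =
  2 * cos (n%:R * th) - 2 * cos (n%:R * t).
Proof.
move=> prim_d.
have prim_Nd : n.-primitive_root (cis (- d)) by rewrite cisN fmorph_primitive_root.
apply: (@complexI R); apply: (mulfI (cis_neq0 (n%:R * th))).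
rewrite -mul_cis_subN rmorph_prod /= -cisX.
rewrite -[in LHS](_ : \prod_(i < n) cis th = cis th ^+ n); last by rewrite prodr_const card_ord.
rewrite -big_split /=; under eq_bigr do rewrite -mul_cis_subN.
rewrite big_split /= !prod_sub_cis //.
have -> : \prod_(i < n) (cis th - cis (- (t + i%:R * d))) =
    \prod_(i < n) (cis th - cis (- t + i%:R * - d)).
  by apply: eq_bigr => i _; congr (_ - cis _); ring.
by rewrite prod_sub_cis // cisX mulrN.
Qed.

End UnitCircle.

Section RealTrigonometry.
Context {R : realType}.

Lemma sin_nat_mulpi j : sin (j%:R * pi) = 0 :> R.
Proof.
elim: j => [|j IHj]; first by rewrite mul0r sin0.
by rewrite mulrSr mulrDl mul1r sinDpi IHj oppr0.
Qed.

Lemma is_derive_horner_cos (p : {poly R}) (o r th : R) :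
  is_derive th 1 (fun x => p.[o + r * cos x]) (- (r * sin th) * p^`().[o + r * cos th]).
Proof. by apply: is_derive_eq; rewrite /GRing.scale /=; ring. Qed.

Variable n : nat.
Hypothesis n_gt0 : (0 < n)%N.

Lemma cos_pi_frac_subn k : (k <= n)%N ->
  cos (pi * (n - k)%:R / n%:R) = - cos (pi * k%:R / n%:R) :> R.
Proof.
move=> k_le_n; have n_neq0 : (n%:R : R) != 0 by rewrite pnatr_eq0 -lt0n.
rewrite natrB // (_ : pi * _ / _ = - (pi * k%:R / n%:R) + pi); last by field.
by rewrite cosDpi cosN.
Qed.

Lemma cos_pi_frac_half : ~~ odd n -> cos (pi * (n./2)%:R / n%:R) = 0 :> R.
Proof.
move=> even_n; have n_half_neq0 : ((n./2)%:R : R) != 0 by rewrite pnatr_eq0; lia.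
rewrite -[in n%:R](even_halfK even_n) -muln2 natrM.
by rewrite (_ : pi * _ / _ = pi / 2) ?cos_pihalf //; field.
Qed.

Lemma cos_pi_frac_inj j k : (j <= n)%N -> (k <= n)%N ->
  cos (pi * j%:R / n%:R) = cos (pi * k%:R / n%:R) :> R -> j = k.
Proof.
have [pi_gt0 n_pos] : (0 : R) < pi /\ (0 : R) < n%:R by split; [exact: pi_gt0 | rewrite ltr0n].
have frac_in i : (i <= n)%N -> pi * i%:R / n%:R \in `[0, (pi : R)].
  move=> i_le_n; rewrite in_itv /= divr_ge0 ?mulr_ge0 ?(ltW pi_gt0) //=.
  by rewrite ler_pdivrMr // ler_pM2l // ler_nat.
move=> j_le_n k_le_n /(cos_inj (frac_in _ j_le_n) (frac_in _ k_le_n)).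
rewrite -!mulrA => /(mulfI (lt0r_neq0 pi_gt0)) /(mulIf (invr_neq0 (lt0r_neq0 n_pos))).
by move/eqP; rewrite eqr_nat => /eqP.
Qed.

End RealTrigonometry.

Definition abscissa_poly {R : realType} {n : nat} (A : 'I_n -> R * R) : {poly R} :=
  \prod_(i < n) ('X - ((A i).1)%:P).

Section RegularPolygon.
Context {R : realType} {n : nat} {A : 'I_n -> R * R} {O : R * R} {r : R}.
Hypotheses (n_gt0 : (0 < n)%N) (ngonA : regular_ngon A O r).

Local Notation P := (abscissa_poly A).
Local Notation x_ j := (O.1 + r * cos (pi * j%:R / n%:R)).

Lemma horner_abscissa_poly_cos : exists t : R, forall th : R,
  P.[O.1 + r * cos th] = (r / 2) ^+ n * (2 * cos (n%:R * th) - 2 * cos (n%:R * t)).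
Proof.
have [_ [t [s [s_pm1 A_def]]]] := ngonA.
have n_neq0 : (n%:R : R) != 0 by rewrite pnatr_eq0 -lt0n.
set d := s * (2 * pi / n%:R).
have prim_d : n.-primitive_root (cis d).
  by rewrite /d; case: s_pm1 => ->; rewrite ?mul1r ?mulN1r ?cisN ?fmorph_primitive_root cis_primitive_root.
exists t => th; rewrite -(prod_cos_sub _ t _ th prim_d) horner_prod.
rewrite -[(r / 2) ^+ n](_ : \prod_(i < n) (r / 2) = _); last by rewrite prodr_const card_ord.
rewrite -big_split /=; apply: eq_bigr => i _; rewrite hornerXsubC A_def /=.
by rewrite (_ : s * _ = i%:R * d) /d; field.
Qed.

Lemma root_deriv_abscissa_poly j : (0 < j < n)%N -> root P^`() (x_ j).
Proof.
move=> /andP[j_gt0 j_lt_n].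
have [r_gt0 _] := ngonA.
have n_neq0 : (n%:R : R) != 0 by rewrite pnatr_eq0 -lt0n.
have [t P_cos] := horner_abscissa_poly_cos.
set th := pi * j%:R / n%:R; set K := (r / 2) ^+ n; set C := 2 * cos (n%:R * t).
have dRHS : is_derive th 1 (fun x => K * (2 * cos (n%:R * x) - C))
    (- (K * 2 * (n%:R * sin (n%:R * th)))).
  by apply: is_derive_eq; rewrite /GRing.scale /=; ring.
have := @derive_val _ _ _ _ _ _ _ (is_derive_horner_cos P O.1 r th).
rewrite (_ : (fun x => _) = fun x => K * (2 * cos (n%:R * x) - C)); last first.
  by apply/funext => x; rewrite P_cos.
rewrite (@derive_val _ _ _ _ _ _ _ dRHS) (_ : n%:R * th = j%:R * pi); last by rewrite /th; field.
have sin_th_gt0 : 0 < sin th.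
  apply: sin_gt0_pi; rewrite divr_gt0 ?mulr_gt0 ?pi_gt0 ?ltr0n //=.
  by rewrite ltr_pdivrMr ?ltr0n // ltr_pM2l ?pi_gt0 ?ltr_nat.
rewrite sin_nat_mulpi !mulr0 oppr0 => /esym/eqP.
by rewrite mulNr oppr_eq0 !mulf_eq0 (gt_eqF r_gt0) (gt_eqF sin_th_gt0).
Qed.

Lemma deriv_abscissa_poly :
  P^`() = n%:R *: \prod_(1 <= j < n) ('X - (x_ j)%:P).
Proof.
have monic_P : P \is monic by exact: monic_prod_XsubC.
have size_P : size P = n.+1.
  by rewrite size_prod_XsubC /index_enum -enumT size_enum_ord.
have size_dP : size P^`() = n by rewrite size_deriv size_P.
have lead_dP : lead_coef P^`() = n%:R.
  rewrite lead_coefE size_dP coef_deriv prednK //.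
  by rewrite -[P`_n]/(P`_(n.+1).-1) -size_P -lead_coefE (monicP monic_P).
set xs := [seq x_ j | j <- index_iota 1 n].
have xs_roots : all (root P^`()) xs.
  by apply/allP => _ /mapP[j + ->]; rewrite mem_index_iota => j_range; apply: root_deriv_abscissa_poly.
have xs_uniq : uniq_roots xs.
  rewrite uniq_rootsE map_inj_in_uniq ?iota_uniq // => j k.
  rewrite !mem_index_iota => j_range k_range /addrI /(mulfI (lt0r_neq0 (proj1 ngonA))).
  by apply: cos_pi_frac_inj; lia.
have size_xs : size P^`() = (size xs).+1 by rewrite size_map size_iota size_dP; lia.
by rewrite [LHS](all_roots_prod_XsubC size_xs xs_roots xs_uniq) lead_dP big_map.
Qed.

End RegularPolygon.

Theorem theorem2 (R : realType) (n : nat) (A : 'I_n -> R * R) (O : R * R)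
    (r : R) (f : {poly R}) :
  (3 <= n)%N ->
  regular_ngon A O r ->
  size f = n.+1 ->
  f = lead_coef f *: \prod_(i < n) ('X - ((A i).1)%:P) ->
  (forall k : nat, (1 <= k <= (n.-1)./2)%N ->
     root f^`() (O.1 + r * cos (pi * k%:R / n%:R)) /\
     root f^`() (O.1 - r * cos (pi * k%:R / n%:R))) /\
  (~~ odd n -> root f^`() O.1) /\
  f^`() = (n%:R * lead_coef f) *:
     ((\prod_(1 <= k < ((n.-1)./2).+1)
         (('X - (O.1 + r * cos (pi * k%:R / n%:R))%:P) *
          ('X - (O.1 - r * cos (pi * k%:R / n%:R))%:P)))
      * (if odd n then 1 else 'X - (O.1)%:P)).
Proof.
(* [size f = n.+1] only rules out [f = 0], for which all claims hold trivially. *)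
move=> n_ge3 ngonA _ f_def; have n_gt0 : (0 < n)%N by lia.
have df : f^`() = lead_coef f *: (abscissa_poly A)^`() by rewrite {1}f_def derivZ.
have root_df j : (0 < j < n)%N -> root f^`() (O.1 + r * cos (pi * j%:R / n%:R)).
  move=> j_range; rewrite df rootE hornerZ.
  by rewrite (eqP (root_deriv_abscissa_poly n_gt0 ngonA _ j_range)) mulr0.
split; [|split].
- move=> k k_range; split; first by apply: root_df; lia.
  by rewrite -mulrN -cos_pi_frac_subn //; [apply: root_df|]; lia.
- move=> even_n; have := root_df n./2; rewrite cos_pi_frac_half // mulr0 addr0.
  by apply; lia.
rewrite df (deriv_abscissa_poly n_gt0 ngonA) scalerA mulrC (prod_nat_pairs _ _ n_gt0).
congr (_ *: (_ * _)).
  apply: eq_big_nat => k k_range.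
  by rewrite cos_pi_frac_subn ?mulrN //; lia.
by case: ifP => // /negbT even_n; rewrite cos_pi_frac_half // mulr0 addr0.
Qed.
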